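(* Let $K$ be a number field, let $\alpha>1$ be real, and let $F\in K[[x^{\mathbb{R}}]]$ be a Hahn series satisfying $\sum_{i=0}^d P_i(x)F(x^{\alpha^i})=0$ for some polynomials $P_0,\dots,P_d\in K[x]$ with $P_d\ne0$. For $s\in\mathbb{R}$ let $T(s)=\alpha^{\mathbb{Z}}s+\mathbb{Z}[\alpha,\alpha^{-1}]=\{\alpha^m s+r: m\in\mathbb{Z},\ r\in\mathbb{Z}[\alpha,\alpha^{-1}]\}$; these sets are the equivalence classes of the relation $x\sim y$ iff $\alpha^m x+r=y$ for some $m\in\mathbb{Z}$, $r\in\mathbb{Z}[\alpha,\alpha^{-1}]$. Let $\widehat{P(F)}$ be the set of equivalence classes meeting $P(F)$. Then $$F(x)=\sum_{T(s)\in\widehat{P(F)}}{}_{T(s)}[F(x)],$$ and each ${}_{T(s)}[F]$ is $\alpha$-Mahler, satisfying the same equation $\sum_{i=0}^d P_i(x)\,{}_{T(s)}[F](x^{\alpha^i})=0$.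
   Context: $K[[x^{\mathbb{R}}]]$ is the field of Hahn series $\sum_{i\in\mathbb{R}} f_ix^i$ ($f_i\in K$) with well-ordered support $P(F)=\{i:f_i\ne0\}$; $F(x^\gamma)=\sum_i f_ix^{\gamma i}$. $\mathbb{Z}[\alpha,\alpha^{-1}]$ is the subring of $\mathbb{R}$ generated by $\alpha$ and $\alpha^{-1}$. For $A\subseteq\mathbb{R}$, ${}_A[G]$ denotes the Hahn series consisting of the terms of $G$ with exponents in $A$. *)

From Stdlib Require Import Reals List ClassicalDescription.
From HB Require Import structures.
From mathcomp Require Import all_boot all_order all_algebra all_field.
Set Implicit Arguments. Unset Strict Implicit. Unset Printing Implicit Defensive.
Import GRing.Theory.
Local Open Scope ring_scope.

Notation numberField := (fieldExtType rat).

Section Hahn.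
Variable K : numberField.

(* A formal series sum_i f_i x^i (i real) is represented by its coefficient
   function f : R -> K.  Support P(F) = {i | f_i <> 0}. *)
Definition supp (f : R -> K) : R -> Prop := fun i => f i <> 0.

Definition well_ordered (A : R -> Prop) : Prop :=
  forall B : R -> Prop, (forall x, B x -> A x) -> (exists x, B x) ->
    exists m, B m /\ forall y, B y -> Rle m y.

Definition hahn (f : R -> K) : Prop := well_ordered (supp f).

(* F(x^g) = sum_i f_i x^{g i}, for g > 0: coefficient at j is f_{j/g}. *)
Definition msubst (g : R) (f : R -> K) : R -> K := fun j => f (Rdiv j g).

Definition pmul (p : {poly K}) (f : R -> K) : R -> K :=
  fun j => \sum_(k < size p) p`_k * f (Rminus j (INR k)).

Definition mahler_eq (alpha : R) (d : nat) (P : nat -> {poly K}) (f : R -> K) : Prop :=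
  forall j : R, \sum_(i < d.+1) pmul (P i) (msubst (pow alpha i) f) j = 0.

Definition restr (A : R -> Prop) (f : R -> K) : R -> K :=
  fun j => if excluded_middle_informative (A j) then f j else 0.

Definition hsum (I : Type) (G : I -> R -> K) (H : R -> K) : Prop :=
  well_ordered (fun j => exists i, G i j <> 0) /\
  forall j, exists s : seq I, NoDup s /\ (forall i, ~ In i s -> G i j = 0) /\
     H j = \sum_(i <- s) G i j.
End Hahn.

Inductive Zalpha (alpha : R) : R -> Prop :=
| Za_one : Zalpha alpha R1
| Za_alpha : Zalpha alpha alpha
| Za_inv : Zalpha alpha (Rinv alpha)
| Za_opp : forall x, Zalpha alpha x -> Zalpha alpha (Ropp x)
| Za_add : forall x y, Zalpha alpha x -> Zalpha alpha y -> Zalpha alpha (Rplus x y)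
| Za_mul : forall x y, Zalpha alpha x -> Zalpha alpha y -> Zalpha alpha (Rmult x y).

Definition Tclass (alpha s : R) : R -> Prop :=
  fun y => exists (m : Z) (r : R), Zalpha alpha r /\ y = Rplus (Rmult (powerRZ alpha m) s) r.

Definition classes (K : numberField) (alpha : R) (F : R -> K) : Type :=
  { T : R -> Prop | exists s, supp F s /\ T = Tclass alpha s }.

(* The operators F(x) |-> x^k F(x^(alpha^i)) move an exponent j to alpha^i j + k,
   which stays in the class T(j).  Hence the coefficient of x^j in the Mahler
   equation only involves coefficients of F with exponents in T(j), so the
   equation holds class by class; and since the classes partition the support
   of F, F is the sum of its restrictions to them, with at most one nonzero
   term at each exponent. *)
From Stdlib Require Import Reals.
From mathcomp Require Import all_boot all_algebra all_field.
From Stdlib Require Import Classical ClassicalDescription.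
From Stdlib Require Import FunctionalExtensionality PropExtensionality Lra.

Section AlphaClasses.
Set Implicit Arguments.
Local Open Scope R_scope.
Variable a : R.
Hypothesis a_neq0 : a <> 0.

Lemma Zalpha0 : Zalpha a 0.
Proof.
replace 0 with (R1 + - R1) by ring.
by apply: Za_add; [apply: Za_one | apply/Za_opp/Za_one].
Qed.

Lemma Zalpha_pow x n : Zalpha a x -> Zalpha a (x ^ n).
Proof. by move=> Zx; elim: n => [|n IHn] /=; [apply: Za_one | apply: Za_mul]. Qed.

Lemma Zalpha_powerRZ n : Zalpha a (powerRZ a n).
Proof.
case: n => [|n|n] /=; [exact: Za_one | exact/Zalpha_pow/Za_alpha |].
by rewrite (Rinv_pow_depr _ _ a_neq0); apply/Zalpha_pow/Za_inv.
Qed.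

Lemma Zalpha_INR k : Zalpha a (INR k).
Proof.
elim: k => [|k IHk]; first exact: Zalpha0.
by rewrite S_INR; apply: Za_add; [exact: IHk | exact: Za_one].
Qed.

Lemma Tclass_refl s : Tclass a s s.
Proof. by exists Z0, 0; split; [exact: Zalpha0 | rewrite /=; ring]. Qed.

Lemma Tclass_affine s y n r : Tclass a s y -> Zalpha a r ->
  Tclass a s (powerRZ a n * y + r).
Proof.
move=> [m [r0 [Zr0 ->]]] Zr.
exists (Z.add n m), (powerRZ a n * r0 + r); split.
  by apply: Za_add => //; apply: Za_mul => //; exact: Zalpha_powerRZ.
rewrite (powerRZ_add _ _ _ a_neq0); ring.
Qed.

Lemma Tclass_trans s j y : Tclass a s j -> Tclass a j y -> Tclass a s y.
Proof. by move=> Tsj [n [r [Zr ->]]]; apply: Tclass_affine. Qed.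

Lemma Tclass_sym s j : Tclass a s j -> Tclass a j s.
Proof.
move=> [m [r [Zr Ej]]].
have -> : s = powerRZ a (Z.opp m) * j + - (powerRZ a (Z.opp m) * r).
  rewrite Ej Rmult_plus_distr_l -Rmult_assoc -(powerRZ_add _ _ _ a_neq0).
  by rewrite Z.add_opp_diag_l /=; ring.
apply: Tclass_affine; first exact: Tclass_refl.
by apply/Za_opp/Za_mul => //; exact: Zalpha_powerRZ.
Qed.

Lemma Tclass_eq s j : Tclass a s j -> Tclass a s = Tclass a j.
Proof.
move=> Tsj; apply: functional_extensionality => y.
apply: propositional_extensionality; split; last exact: Tclass_trans Tsj.
exact: Tclass_trans (Tclass_sym Tsj).
Qed.

Lemma Tclass_shift s j k i :
  Tclass a s ((j - INR k) / a ^ i) <-> Tclass a s j.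
Proof.
have ai_neq0 : a ^ i <> 0 by exact: pow_nonzero.
split=> Tsj.
- have -> : j = powerRZ a (Z.of_nat i) * ((j - INR k) / a ^ i) + INR k.
    by rewrite -pow_powerRZ; field.
  by apply: Tclass_affine => //; exact: Zalpha_INR.
- have -> : (j - INR k) / a ^ i
            = powerRZ a (Z.opp (Z.of_nat i)) * j + - (INR k * powerRZ a (Z.opp (Z.of_nat i))).
    by rewrite powerRZ_neg' // -pow_powerRZ; field.
  apply: Tclass_affine => //.
  by apply/Za_opp/Za_mul; [exact: Zalpha_INR | exact: Zalpha_powerRZ].
Qed.

End AlphaClasses.

Section Restriction.
Set Implicit Arguments.
Variable K : numberField.
Implicit Types (A : R -> Prop) (f : R -> K).

Lemma well_ordered_subset (A B : R -> Prop) :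
  (forall x, B x -> A x) -> well_ordered A -> well_ordered B.
Proof. by move=> BA woA C CB; apply: woA => x /CB /BA. Qed.

Lemma restr_in A f j : A j -> restr A f j = f j.
Proof. by rewrite /restr; case: excluded_middle_informative. Qed.

Lemma restr_notin A f j : ~ A j -> restr A f j = 0%R.
Proof. by rewrite /restr; case: excluded_middle_informative. Qed.

Lemma supp_restr A f j : supp (restr A f) j -> supp f j.
Proof. by rewrite /supp /restr; case: excluded_middle_informative. Qed.

Lemma hahn_restr A f : hahn f -> hahn (restr A f).
Proof. exact/well_ordered_subset/supp_restr. Qed.

Lemma mahler_eq_restr alpha d P A f :
  (forall j k i, A (Rdiv (Rminus j (INR k)) (pow alpha i)) <-> A j) ->
  mahler_eq alpha d P f -> mahler_eq alpha d P (restr A f).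
Proof.
move=> A_shift eqf j; rewrite /pmul /msubst.
case: (classic (A j)) => Aj.
- apply: etrans (eqf j); apply: eq_bigr => i _; apply: eq_bigr => k _.
  by rewrite restr_in // A_shift.
- apply: big1 => i _; apply: big1 => k _.
  by rewrite restr_notin ?GRing.mulr0 // A_shift.
Qed.

Lemma hsum_restr_partition (I : Type) (A : I -> R -> Prop) f :
  hahn f -> (forall j, supp f j -> exists i, A i j /\ forall i', A i' j -> i' = i) ->
  hsum (fun i => restr (A i) f) f.
Proof.
move=> hahnf partA; split.
  by apply: well_ordered_subset hahnf => j [i /supp_restr].
move=> j; case: (classic (f j = 0%R)) => [fj0 | /partA [i [Aij uniq_i]]].
  exists [::]; split; first by constructor.
  split; last by rewrite big_nil.
  by move=> i _; case: (classic (A i j)) => [/restr_in -> | /restr_notin].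
exists [:: i]; split; first by constructor; [case | constructor].
split; last by rewrite big_seq1 restr_in.
move=> i' i'_notin; apply: restr_notin => Ai'j.
by apply: i'_notin; left; rewrite (uniq_i i').
Qed.

End Restriction.

Section Classes.
Set Implicit Arguments.
Variables (K : numberField) (alpha : R) (F : R -> K).
Hypothesis alpha_neq0 : alpha <> R0.

Lemma classes_shift_invariant (T : classes alpha F) j k i :
  proj1_sig T (Rdiv (Rminus j (INR k)) (pow alpha i)) <-> proj1_sig T j.
Proof.
by case: T => T suppT /=; have [s [_ ->]] := suppT; exact: Tclass_shift.
Qed.

Lemma classes_partition_supp j : supp F j ->
  exists T : classes alpha F, proj1_sig T j /\ forall T', proj1_sig T' j -> T' = T.
Proof.
move=> Fj; exists (exist _ (Tclass alpha j) (ex_intro _ j (conj Fj erefl))).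
split=> [|[T suppT] /= Tj]; first exact: Tclass_refl.
have {}T_eq : T = Tclass alpha j.
  have [s [_ T_eq]] := suppT; subst T; exact: Tclass_eq.
by subst T; congr exist; apply: proof_irrelevance.
Qed.

End Classes.

Theorem mainTheorem7 (K : numberField) (alpha : R) (F : R -> K)
    (d : nat) (P : nat -> {poly K}) :
  Rlt R1 alpha -> hahn F -> P d != 0%R -> mahler_eq alpha d P F ->
  hsum (fun T : classes alpha F => restr (proj1_sig T) F) F /\
  (forall T : classes alpha F,
     hahn (restr (proj1_sig T) F) /\ mahler_eq alpha d P (restr (proj1_sig T) F)).
Proof.
(* [P d != 0] only rules out the trivial equation; the splitting does not use it. *)
move=> alpha_gt1 hahnF _ eqF.
have alpha_neq0 : alpha <> R0 by move=> alpha0; rewrite alpha0 in alpha_gt1; lra.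
split; first exact: hsum_restr_partition hahnF (classes_partition_supp alpha_neq0).
move=> T; split; first exact: hahn_restr.
exact: mahler_eq_restr (classes_shift_invariant alpha_neq0 T) eqF.
Qed.
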